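(* Let $n=2^m\geq 8$. If $B\subseteq X^n$ is a set in which any two words are at Hamming distance at most $4$, then $|B|\leq n^2$. Moreover, there exists a set $B\subseteq X^n$ of diameter $4$ with $|B|=n^2$.
   Context: $X^n$ is the set of words of length $n$ over the alphabet $\{*,0,1\}$ containing exactly one symbol $*$. The Hamming distance between two words is the number of coordinates in which they differ; the diameter of a set is the maximum distance between two of its elements. *)

From mathcomp Require Import all_boot.
Set Implicit Arguments. Unset Strict Implicit. Unset Printing Implicit Defensive.

(* Alphabet {*,0,1}: encoded as option bool, with None = *, Some false = 0, Some true = 1. *)
Definition letter := option bool.

Definition word (n : nat) := {ffun 'I_n -> letter}.

Definition Xn (n : nat) : {set word n} :=
  [set w : word n | #|[set i | w i == None]| == 1].

Definition hdist (n : nat) (u v : word n) : nat := #|[set i | u i != v i]|.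

Definition diam (n : nat) (B : {set word n}) : nat :=
  \max_(u in B) \max_(v in B) hdist u v.

From mathcomp Require Import all_boot ssralg finalg finfield ring zify.
Set Implicit Arguments. Unset Strict Implicit. Unset Printing Implicit Defensive.
Import GRing.Theory.

(* The n^2 words with the star anywhere and at most one 1 pairwise differ in at
   most four places.

   Conversely, changing a 1 of a word of B into a 0 whenever the result is not
   already in B keeps |B|, the inclusion in X^n and the diameter bound, and
   lowers the total number of 1's; so B may be assumed closed under changing
   1's into 0's.  Then, lowering v to the zeros of u, the 1's of u and v and
   (when they differ) the two stars occupy at most four positions.  For n >= 16
   a case analysis on the largest number of 1's in a word of B (at least 3;
   exactly 2, with one or two star positions among such words; at most 1) and a
   count of the possible sets of 1's at each star position give |B| <= n^2.

   For n = 8, index the positions by the elements a_k of GF(8), let A(w) be the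
   set of 1's of w, enlarged by the star when this makes its size even, and
   colour w by (sum_{A(w)} a_k, sum_{A(w)} a_k^3 + a_(star w)^3).  Two words at
   distance at most 4 with the same colour would give a set of at most five
   positions with vanishing first power sum and with third power sum equal to
   the sum of the cubes at the two stars.  In characteristic 2,
   a + b + c + d = 0 forces a^3 + b^3 + c^3 + d^3 = (a + b)(b + c)(c + a), and
   cubing is injective on GF(8); this rules it out.  So B injects into GF(8)^2. *)

Section Words.
Variable n : nat.
Implicit Types (u v w : word n) (X Y Z : {set 'I_n}).

Definition ones w : {set 'I_n} := [set k | w k == Some true].
Definition stars w : {set 'I_n} := [set k | w k == None].

Definition word_of (i : 'I_n) X : word n :=
  [ffun k => if k == i then None else Some (k \in X)].

Definition lower w Y : word n :=
  [ffun k => if (w k == Some true) && (k \notin Y) then Some false else w k].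

Lemma in_Xn w : (w \in Xn n) = (#|stars w| == 1).
Proof. by rewrite inE. Qed.

Lemma stars_word_of i X : stars (word_of i X) = [set i].
Proof. by apply/setP=> k; rewrite !inE ffunE; case: (k == i). Qed.

Lemma word_of_Xn i X : word_of i X \in Xn n.
Proof. by rewrite in_Xn stars_word_of cards1. Qed.

Lemma ones_word_of i X : i \notin X -> ones (word_of i X) = X.
Proof.
move=> iX; apply/setP=> k; rewrite !inE ffunE.
by case: (k =P i) => [->|_]; [rewrite (negbTE iX) | case: (k \in X)].
Qed.

Lemma ones_lower w Y : ones (lower w Y) = ones w :&: Y.
Proof. by apply/setP=> k; rewrite !inE ffunE; case: (w k) => [[]|] /=; case: (k \in Y). Qed.

Lemma stars_lower w Y : stars (lower w Y) = stars w.
Proof. by apply/setP=> k; rewrite !inE ffunE; case: (w k) => [[]|] /=; case: (k \in Y). Qed.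

Lemma lower_Xn w Y : w \in Xn n -> lower w Y \in Xn n.
Proof. by rewrite !in_Xn stars_lower. Qed.

Lemma ones_lower1 w k : ones (lower w [set~ k]) = ones w :\ k.
Proof. by rewrite ones_lower setDE. Qed.

Lemma lower_lower w Y Z : lower (lower w Y) Z = lower w (Y :&: Z).
Proof.
apply/ffunP=> k; rewrite !ffunE inE.
by case: (w k) => [[]|] //=; case: (k \in Y); case: (k \in Z).
Qed.

Lemma lower_id w Y : ones w \subset Y -> lower w Y = w.
Proof.
move/subsetP=> sub; apply/ffunP=> k; rewrite ffunE.
by case: (w k =P Some true) => //= /eqP wk; rewrite sub ?inE.
Qed.

Lemma lower1_inj k u v : u k = Some true -> v k = Some true ->
  lower u [set~ k] = lower v [set~ k] -> u = v.
Proof.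
move=> uk vk /ffunP E; apply/ffunP=> x; have := E x; rewrite !ffunE !inE negbK.
by case: (x =P k) => [->|]; rewrite ?uk ?vk ?andbF.
Qed.

Lemma hdistC u v : hdist u v = hdist v u.
Proof. by apply: eq_card=> k; rewrite !inE eq_sym. Qed.

Lemma hdist_lower1_le k u v : v k != Some true ->
  hdist (lower u [set~ k]) v <= hdist u v.
Proof.
move=> vk; apply: subset_leq_card; apply/subsetP=> x; rewrite !inE ffunE !inE negbK.
case: (x =P k) => [->|_] /=; rewrite ?andbF //.
by rewrite andbT; case: (u k =P Some true) => [-> _|] //; rewrite eq_sym.
Qed.

Lemma hdist_lower1_swap k u v : u k = Some true -> v k = Some true ->
  hdist (lower u [set~ k]) v = hdist u (lower v [set~ k]).
Proof.
move=> uk vk; apply: eq_card=> x; rewrite !inE !ffunE !inE negbK.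
by case: (x =P k) => [->|]; rewrite ?uk ?vk ?andbF.
Qed.

Lemma hdist_lower1 k u v : u k = Some true -> v k = Some true ->
  hdist (lower u [set~ k]) (lower v [set~ k]) = hdist u v.
Proof.
move=> uk vk; apply: eq_card=> x; rewrite !inE !ffunE !inE negbK.
by case: (x =P k) => [->|]; rewrite ?uk ?vk ?andbF.
Qed.

End Words.

Section Diameter.
Variable n : nat.
Implicit Types (B : {set word n}).

Definition anticode (d : nat) B :=
  forall u v, u \in B -> v \in B -> hdist u v <= d.

Lemma diam_le d B : anticode d B -> diam B <= d.
Proof. by move=> Bd; apply/bigmax_leqP=> u uB; apply/bigmax_leqP=> v vB; apply: Bd. Qed.

Lemma hdist_le_diam B u v : u \in B -> v \in B -> hdist u v <= diam B.
Proof.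
move=> uB vB; apply: leq_trans (leq_bigmax_cond _ uB).
by rewrite (bigD1 v vB) leq_maxl.
Qed.

End Diameter.

Section SquareCode.
Variable n : nat.

Definition square_word (p : 'I_n * 'I_n) : word n :=
  word_of p.1 (if p.2 == p.1 then set0 else [set p.2]).

Definition square_code : {set word n} := square_word @: setT.

Lemma square_word_inj : injective square_word.
Proof.
move=> [i k] [j l] /= E.
have eij : i = j.
  have := congr1 (fun w : word n => w i) E; rewrite !ffunE eqxx /=.
  by case: eqP.
subst j.
have notin_ones (a : 'I_n) : i \notin (if a == i then set0 else [set a]).
  by case: (a =P i) => [_|/eqP]; rewrite ?inE // eq_sym.
have := congr1 (@ones n) E; rewrite !ones_word_of ?notin_ones //.
case: (k =P i) => [->|/eqP ki]; case: (l =P i) => [->|/eqP li] //.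
- by move/setP/(_ l); rewrite !inE eqxx.
- by move/setP/(_ k); rewrite !inE eqxx.
by move/setP/(_ k); rewrite !inE eqxx => /esym/eqP ->.
Qed.

Lemma card_square_code : #|square_code| = n ^ 2.
Proof. by rewrite card_imset ?cardsT ?card_prod ?card_ord ?mulnn //; exact: square_word_inj. Qed.

Lemma square_code_sub : square_code \subset Xn n.
Proof. by apply/subsetP=> w /imsetP[p _ ->]; apply: word_of_Xn. Qed.

Lemma square_code_anticode : anticode 4 square_code.
Proof.
move=> _ _ /imsetP[[i k] _ ->] /imsetP[[j l] _ ->].
apply: (@leq_trans #|[set i; j] :|: [set k; l]|).
  apply: subset_leq_card; apply/subsetP=> x; rewrite !inE; apply: contraLR.
  rewrite !negb_or => /andP[/andP[xi xj] /andP[xk xl]]; rewrite negbK.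
  rewrite !ffunE /= (negbTE xi) (negbTE xj).
  by case: (k == i); case: (l == j); rewrite ?inE ?(negbTE xk) ?(negbTE xl).
apply: (leq_trans (leq_card_setU _ _)).
by rewrite !cards2; case: (i != j); case: (k != l).
Qed.

Lemma diam_square_code : 4 <= n -> diam square_code = 4.
Proof.
move=> n4; apply/eqP; rewrite eqn_leq diam_le /=; last exact: square_code_anticode.
pose a (m : nat) (lt_m4 : m < 4) := Ordinal (leq_trans lt_m4 n4).
set a0 := a 0 isT; set a1 := a 1 isT; set a2 := a 2 isT; set a3 := a 3 isT.
apply: (@leq_trans (hdist (square_word (a0, a2)) (square_word (a1, a3)))).
  have -> : 4 = #|[set x in [:: a0; a1; a2; a3]]|.
    by rewrite cardsE; apply/esym/card_uniqP.
  apply: subset_leq_card; apply/subsetP=> x; rewrite !inE.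
  by case/or4P=> /eqP ->; rewrite !ffunE /= ?inE.
by apply: hdist_le_diam; apply: imset_f.
Qed.

End SquareCode.

Section Compression.
Variable n : nat.
Implicit Types (B : {set word n}) (u v w : word n).

Definition down_closed B :=
  forall w k, w \in B -> w k = Some true -> lower w [set~ k] \in B.

Definition downshift k B w :=
  if (w k == Some true) && (lower w [set~ k] \notin B) then lower w [set~ k] else w.

Definition compress k B := [set downshift k B w | w in B].

Definition weight B := \sum_(w in B) #|ones w|.

Lemma downshift_inj k B : {in B &, injective (downshift k B)}.
Proof.
move=> u v uB vB; rewrite /downshift.
case: ifP => [/andP[/eqP uk uS]|_]; case: ifP => [/andP[/eqP vk vS]|_] E //.
- exact: lower1_inj uk vk E.
- by move: uS; rewrite E vB.
- by move: vS; rewrite -E uB.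
Qed.

Lemma card_compress k B : #|compress k B| = #|B|.
Proof. exact/card_in_imset/downshift_inj. Qed.

Lemma compress_sub k B : B \subset Xn n -> compress k B \subset Xn n.
Proof.
move=> /subsetP BX; apply/subsetP=> _ /imsetP[w wB ->]; rewrite /downshift.
by case: ifP => _; [apply: lower_Xn|]; apply: BX.
Qed.

Lemma anticode_compress d k B : anticode d B -> anticode d (compress k B).
Proof.
move=> Bd _ _ /imsetP[u uB ->] /imsetP[v vB ->]; rewrite /downshift.
have kept w : w k = Some true ->
    ~~ ((w k == Some true) && (lower w [set~ k] \notin B)) -> lower w [set~ k] \in B.
  by move=> ->; rewrite eqxx /= negbK.
case: ifP => [/andP[/eqP uk _]|uN]; case: ifP => [/andP[/eqP vk _]|vN].
- by rewrite hdist_lower1 //; apply: Bd.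
- case: (v k =P Some true) => [vk|/eqP vk].
    by rewrite hdist_lower1_swap //; apply: Bd (kept v vk (negbT vN)).
  exact: leq_trans (hdist_lower1_le u vk) (Bd _ _ uB vB).
- case: (u k =P Some true) => [uk|/eqP uk].
    by rewrite hdistC hdist_lower1_swap // hdistC; apply: Bd (kept u uk (negbT uN)) vB.
  by rewrite hdistC; apply: leq_trans (hdist_lower1_le v uk) (Bd _ _ vB uB).
- exact: Bd.
Qed.

Lemma weight_compress_lt k B w : w \in B -> w k = Some true ->
  lower w [set~ k] \notin B -> weight (compress k B) < weight B.
Proof.
move=> wB wk wS; rewrite /weight big_imset /=; last exact: downshift_inj.
rewrite (bigD1 w wB) [X in _ < X](bigD1 w wB) /= {1}/downshift wk eqxx wS /=.
rewrite -addSn leq_add //.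
  by rewrite ones_lower1 (cardsD1 k (ones w)) inE wk.
apply: leq_sum=> v _; rewrite /downshift; case: ifP => // _.
by rewrite ones_lower1 subset_leq_card ?subD1set.
Qed.

Lemma down_closed_compression d B : B \subset Xn n -> anticode d B ->
  exists B', [/\ B' \subset Xn n, anticode d B', down_closed B' & #|B'| = #|B|].
Proof.
move=> BX Bd; have [m] := ubnP (weight B); elim: m B BX Bd => // m IH B BX Bd wB.
case: (pickP (fun p : word n * 'I_n =>
    [&& p.1 \in B, p.1 p.2 == Some true & lower p.1 [set~ p.2] \notin B])).
  move=> [w k] /and3P[/= wB' /eqP wk wS].
  have [B' [B'X B'd B'dc cB']] := IH (compress k B) (compress_sub k BX)
    (anticode_compress (k := k) Bd) (leq_trans (weight_compress_lt wB' wk wS) wB).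
  by exists B'; rewrite cB' card_compress.
move=> none; exists B; split=> // w k wB' wk; apply/negPn/negP=> wS.
by have := none (w, k); rewrite /= wB' wk eqxx wS.
Qed.

Lemma down_closed_lower B w Y : down_closed B -> w \in B -> lower w Y \in B.
Proof.
move=> dB; have [m] := ubnP #|ones w :\: Y|; elim: m w => // m IH w lt_m wB.
case: (set_0Vmem (ones w :\: Y)) => [/eqP|[k kwY]].
  by rewrite setD_eq0 => /lower_id ->.
have /[!inE] /andP[kY /eqP wk] := kwY.
have -> : lower w Y = lower (lower w [set~ k]) Y.
  rewrite lower_lower; congr lower; apply/setP=> x; rewrite !inE.
  by case: (x =P k) => // ->; rewrite (negbTE kY).
apply: IH (dB _ _ wB wk); rewrite ones_lower1 setDDl setUC -setDDl.
by move: lt_m; rewrite (cardsD1 k (ones w :\: Y)) kwY.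
Qed.

End Compression.

Section FiniteSets.
Variable T : finType.
Implicit Types (A Y : {set T}).

Lemma card_setU_le_sub A Y : #|A :|: Y| <= #|A| -> Y \subset A.
Proof.
move=> le_AY; have /eqP -> : A == A :|: Y by rewrite eqEcard subsetUl.
exact: subsetUr.
Qed.

Lemma set_le1_pick Y : #|Y| <= 1 -> Y = if [pick x in Y] is Some x then [set x] else set0.
Proof.
move=> Y1; case: pickP => [x xY|none].
  by apply/eqP; rewrite eq_sym eqEcard sub1set xY cards1.
by apply/setP=> x; rewrite inE; have := none x; rewrite /= => ->.
Qed.

Lemma card_subsets_le1 A : #|[set Y : {set T} | (Y \subset A) && (#|Y| <= 1)]| <= #|A|.+1.
Proof.
pose f (Y : {set T}) := [pick x in Y].
have f_inj : {in [set Y : {set T} | (Y \subset A) && (#|Y| <= 1)] &, injective f}.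
  move=> Y Y'; rewrite !inE => /andP[_ Y1] /andP[_ Y'1]; rewrite /f => E.
  by rewrite (set_le1_pick Y1) (set_le1_pick Y'1) E.
rewrite -(card_in_imset f_inj).
apply: (leq_trans (subset_leq_card (_ : _ \subset None |: (Some @: A)))).
  apply/subsetP=> _ /imsetP[Y /[!inE] /andP[/subsetP YA _] ->]; rewrite /f.
  by case: pickP => [x /YA xA|_]; rewrite ?eqxx // imset_f.
by rewrite cardsU1 (card_imset _ (@Some_inj _)) -add1n leq_add2r leq_b1.
Qed.

Lemma card_sets_setD_le1 A :
  #|[set Y : {set T} | #|Y :\: A| <= 1]| <= 2 ^ #|A| * #|T|.+1.
Proof.
pose f (Y : {set T}) := (Y :&: A, [pick x in Y :\: A]).
have f_inj : {in [set Y : {set T} | #|Y :\: A| <= 1] &, injective f}.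
  move=> Y Y'; rewrite !inE => Y1 Y'1 [E1 E2].
  by rewrite -(setID Y A) -(setID Y' A) E1 (set_le1_pick Y1) (set_le1_pick Y'1) E2.
rewrite -(card_in_imset f_inj).
apply: (leq_trans (subset_leq_card (_ : _ \subset setX (powerset A) setT))).
  by apply/subsetP=> _ /imsetP[Y _ ->]; rewrite !inE subsetIr.
by rewrite cardsX card_powerset cardsT card_option.
Qed.

Lemma card_sets_le2 :
  #|[set Y : {set T} | #|Y| <= 2]| <= 'C(#|T|, 0) + 'C(#|T|, 1) + 'C(#|T|, 2).
Proof.
rewrite -!card_draws.
have -> : [set Y : {set T} | #|Y| <= 2] = [set Y : {set T} | #|Y| == 0]
    :|: [set Y : {set T} | #|Y| == 1] :|: [set Y : {set T} | #|Y| == 2].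
  by apply/setP=> Y; rewrite !inE; case: #|Y| => [|[|[|k]]].
by apply: (leq_trans (leq_card_setU _ _)); rewrite leq_add2r; apply: leq_card_setU.
Qed.

(* A set Y of this family is either inside the 2-set A :\ j (4 choices) or
   determined by its unique point outside A and by Y :&: A, a subset of A :\ j
   of size at most 1 (3 choices). *)
Lemma card_sets_le2_setD_le1 (j : T) A : j \in A -> #|A| = 3 ->
  #|[set Y : {set T} | [&& j \notin Y, #|Y| <= 2 & #|Y :\: A| <= 1]]|
    <= 4 + 3 * (#|T| - 3).
Proof.
move=> jA A3; set S := [set Y : {set T} | _].
rewrite -(setID S (powerset (A :\ j))).
apply: (leq_trans (leq_card_setU _ _)); apply: leq_add.
  have A2 : #|A :\ j| = 2 by move: (cardsD1 j A); rewrite jA A3 => -[].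
  by apply: (leq_trans (subset_leq_card (subsetIr _ _))); rewrite card_powerset A2.
pose f (Y : {set T}) := (odflt j [pick x in Y :\: A], odflt j [pick x in Y :&: A]).
have shape Y : Y \in S :\: powerset (A :\ j) ->
    [/\ #|Y :\: A| = 1, #|Y :&: A| <= 1 & j \notin Y].
  rewrite !inE => /andP[nsub /and3P[jY Y2 YA]].
  have YA0 : #|Y :\: A| != 0.
    apply: contra nsub; rewrite cards_eq0 => /eqP E; apply/subsetP=> x xY.
    rewrite !inE; have : x \notin Y :\: A by rewrite E inE.
    rewrite !inE xY andbT negbK => ->; rewrite andbT.
    by apply: contraNneq jY => <-.
  have e1 : #|Y :\: A| = 1 by move: YA YA0; case: #|Y :\: A| => [|[]].
  by split=> //; move: Y2; rewrite -(cardsID A Y) e1 addn1 ltnS.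
have f_inj : {in S :\: powerset (A :\ j) &, injective f}.
  move=> Y Y' /shape[e1 e2 e3] /shape[e1' e2' e3'] [E1 E2].
  have out (Z : {set T}) : #|Z :\: A| = 1 ->
      Z :\: A = [set odflt j [pick x in Z :\: A]].
    move=> e; rewrite {1}(set_le1_pick (eq_leq e)); case: pickP => [x _|] //=.
    by move/eq_card0; rewrite e.
  have inA (Z : {set T}) : #|Z :&: A| <= 1 -> j \notin Z ->
      Z :&: A = if odflt j [pick x in Z :&: A] == j then set0
                else [set odflt j [pick x in Z :&: A]].
    move=> e jZ; rewrite {1}(set_le1_pick e); case: pickP => [x|] //=; last by rewrite eqxx.
    by rewrite !inE => /andP[xZ _]; case: (x =P j) => // xj; move: jZ; rewrite -xj xZ.
  rewrite -(setID Y A) -(setID Y' A) (out _ e1) (out _ e1') (inA _ e2 e3) (inA _ e2' e3').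
  by rewrite /f /= in E1 E2; rewrite E1 E2.
rewrite -(card_in_imset f_inj).
apply: (leq_trans (subset_leq_card (_ : _ \subset setX (~: A) A))).
  apply/subsetP=> _ /imsetP[Y /shape[e1 e2 e3] ->]; rewrite !inE /f /=.
  apply/andP; split.
    case: pickP => [x|]; first by rewrite !inE => /andP[].
    by move/eq_card0; rewrite e1.
  by case: pickP => [x|] //=; rewrite !inE => /andP[].
by rewrite cardsX cardsCs setCK A3 mulnC.
Qed.

Lemma cardsU_setD A Y : #|A :|: Y| = #|A :\: Y| + #|Y|.
Proof. have := cardsUI A Y; have := cardsID Y A; lia. Qed.

Lemma exists_subset_card A k : k <= #|A| -> exists2 X : {set T}, X \subset A & #|X| = k.
Proof.
move/card_geqP=> [s [us ss sA]]; exists [set x in s].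
  by apply/subsetP=> x; rewrite inE => /sA.
by rewrite cardsE; move/card_uniqP: us => ->.
Qed.

Definition symdiff (A B : {set T}) : {set T} :=
  [set k | (k \in A) != (k \in B)].

Lemma odd_symdiff A Y : odd #|symdiff A Y| = odd #|A| (+) odd #|Y|.
Proof.
have -> : symdiff A Y = (A :|: Y) :\: (A :&: Y).
  by apply/setP=> k; rewrite !inE; case: (k \in A); case: (k \in Y).
have AIU : A :&: Y \subset A :|: Y by rewrite subIset ?subsetUl.
rewrite cardsDS //.
have : #|A| + #|Y| = (#|A :|: Y| - #|A :&: Y|) + (#|A :&: Y|).*2.
  by have := cardsUI A Y; have := subset_leq_card AIU; rewrite -addnn; lia.
by move/(congr1 odd); rewrite !oddD odd_double addbF => <-.
Qed.

Lemma sum_mem_mul A c : \sum_(j : T) (j \in A) * c = #|A| * c.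
Proof.
rewrite -sum_nat_const [RHS]big_mkcond /=.
by apply: eq_bigr=> j _; case: (j \in A); rewrite ?mul1n ?mul0n.
Qed.

End FiniteSets.

Section Stars.
Variable n' : nat.
Local Notation n := n'.+1.
Implicit Types (B : {set word n}) (u v w : word n).

Definition star w : 'I_n := odflt ord0 [pick k | w k == None].

Definition supp w : {set 'I_n} := star w |: ones w.

Lemma stars_Xn w : w \in Xn n -> stars w = [set star w].
Proof.
rewrite in_Xn => /cards1P[s Es].
have /[!inE] sN : s \in stars w by rewrite Es set11.
suff -> : star w = s by [].
rewrite /star; case: pickP => [k kN|/(_ s)] /=; last by rewrite sN.
by apply/set1P; rewrite -Es inE.
Qed.

Lemma XnE w k : w \in Xn n -> w k = if k == star w then None else Some (k \in ones w).
Proof.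
move/stars_Xn/setP/(_ k); rewrite !inE => <-.
by case: (w k) => [[]|].
Qed.

Lemma star_notin_ones w : w \in Xn n -> star w \notin ones w.
Proof. by move/(XnE (star w)); rewrite inE eqxx => ->. Qed.

Lemma card_supp w : w \in Xn n -> #|supp w| = #|ones w|.+1.
Proof. by move=> wX; rewrite cardsU1 star_notin_ones. Qed.

Lemma Xn_eq u v : u \in Xn n -> v \in Xn n ->
  star u = star v -> ones u = ones v -> u = v.
Proof. by move=> uX vX es eo; apply/ffunP=> k; rewrite (XnE k uX) (XnE k vX) es eo. Qed.

Lemma star_lower w Y : w \in Xn n -> star (lower w Y) = star w.
Proof.
move=> wX; have := stars_Xn (lower_Xn Y wX).
by rewrite stars_lower stars_Xn // => /set1_inj.
Qed.

Section DownClosedAnticode.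
Variables (d : nat) (B : {set word n}).
Hypotheses (BX : B \subset Xn n) (Bd : anticode d B) (dB : down_closed B).

(* Lowering v to the positions where u is 0 makes u and v differ at every
   1 of u or of v, and at both stars when these differ. *)
Lemma card_onesU_starsD_le u v : u \in B -> v \in B ->
  #|ones u :|: ones v :|: [set k | (k == star u) != (k == star v)]| <= d.
Proof.
move=> uB vB; have uX := subsetP BX _ uB; have vX := subsetP BX _ vB.
apply: leq_trans (Bd uB (down_closed_lower (~: ones u) dB vB)).
apply: subset_leq_card; apply/subsetP=> x Dx.
rewrite inE (XnE x uX) (XnE x (lower_Xn _ vX)) star_lower // ones_lower.
move: Dx (star_notin_ones uX) (star_notin_ones vX).
move: (ones u) (ones v) (star u) (star v) => U V su sv; rewrite !inE.
case: (x =P su) => [xu|_]; case: (x =P sv) => [xv|_] //=; try subst su sv;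
  by case: (x \in U); case: (x \in V).
Qed.

Lemma card_onesU_le u v : u \in B -> v \in B -> #|ones u :|: ones v| <= d.
Proof.
move=> uB vB; apply: leq_trans (card_onesU_starsD_le uB vB).
by rewrite subset_leq_card ?subsetUl.
Qed.

Lemma card_suppU_le u v : u \in B -> v \in B -> star u != star v ->
  #|supp u :|: supp v| <= d.
Proof.
move=> uB vB ne; apply: leq_trans (card_onesU_starsD_le uB vB).
apply: subset_leq_card; apply/subsetP=> x; rewrite /supp; move: ne.
move: (ones u) (ones v) (star u) (star v) => U V su sv ne; rewrite !inE.
case: (x =P su) => [xu|_]; case: (x =P sv) => [xv|_] //=.
  by subst su sv; rewrite eqxx in ne.
all: by case: (x \in U); case: (x \in V); rewrite ?orbT.
Qed.

Lemma card_ones_setD_supp_le u v : u \in B -> v \in B -> star u != star v ->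
  #|ones v :\: supp u| + #|supp u| <= d.
Proof.
move=> uB vB ne; rewrite -cardsU_setD; apply: leq_trans (card_suppU_le uB vB ne).
by rewrite subset_leq_card // setUC setUS // subsetUr.
Qed.

Lemma supp_sub_of_card u v : u \in B -> v \in B -> star u != star v ->
  #|supp u| = d -> supp v \subset supp u.
Proof. by move=> uB vB ne cu; apply: card_setU_le_sub; rewrite cu card_suppU_le. Qed.

Lemma ones_sub_supp u v : u \in B -> v \in B -> #|supp u|.+1 = d ->
  star v \notin supp u -> ones v \subset supp u.
Proof.
move=> uB vB cu vu.
have ne : star u != star v by apply: contraNneq vu => <-; rewrite setU11.
have : supp v \subset star v |: supp u.
  apply: card_setU_le_sub; rewrite cardsU1 vu add1n cu.
  apply: leq_trans (card_suppU_le uB vB ne); apply: subset_leq_card.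
  apply/subsetP=> x; rewrite /supp !in_setU !in_set1.
  by case: (x == star u); case: (x == star v); case: (x \in ones u); case: (x \in ones v).
move=> /subsetP sub; apply/subsetP=> x xv.
have : x \in star v |: supp u by apply: sub; rewrite /supp in_setU1 xv orbT.
rewrite in_setU1 => /predU1P[ex|//].
by move: (star_notin_ones (subsetP BX _ vB)); rewrite -ex xv.
Qed.

End DownClosedAnticode.

End Stars.

Section DownClosedBound.
Variable n' : nat.
Local Notation n := n'.+1.
Variable B : {set word n}.
Hypotheses (BX : B \subset Xn n) (Bd : anticode 4 B) (dB : down_closed B).
Hypothesis n_ge16 : 16 <= n.

Lemma card_le_sum_fibres (S : 'I_n -> {set {set 'I_n}}) :
  (forall w, w \in B -> ones w \in S (star w)) -> #|B| <= \sum_j #|S j|.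
Proof.
move=> HS; have XnB := subsetP BX.
have inj : {in B &, injective (fun w => (star w, ones w))}.
  by move=> u v uB vB [e1 e2]; exact: Xn_eq (XnB _ uB) (XnB _ vB) e1 e2.
rewrite -(card_in_imset inj).
apply: (leq_trans (subset_leq_card (_ : _ \subset [set p | p.2 \in S p.1]))).
  by apply/subsetP=> _ /imsetP[w wB ->]; rewrite inE /=; apply: HS.
rewrite -sum1_card (eq_bigl (fun p : 'I_n * {set 'I_n} => true && (p.2 \in S p.1))).
  rewrite -(pair_big_dep xpredT (fun j Y => Y \in S j) (fun _ _ => 1)) /=.
  by apply: leq_sum => j _; rewrite sum1_card.
by move=> p; rewrite inE.
Qed.

Lemma card_le_of_ones_le1 : (forall w, w \in B -> #|ones w| <= 1) -> #|B| <= n ^ 2.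
Proof.
move=> small.
pose S j := [set Y : {set 'I_n} | (Y \subset [set~ j]) && (#|Y| <= 1)].
apply: (leq_trans (card_le_sum_fibres (S := S) _)).
  move=> w wB; rewrite inE small // andbT; apply/subsetP=> x xw; rewrite !inE.
  by apply: contraTneq xw => ->; exact: star_notin_ones (subsetP BX _ wB).
apply: (@leq_trans (\sum_(j < n) n)); last by rewrite sum_nat_const card_ord mulnn.
by apply: leq_sum=> j _; apply: leq_trans (card_subsets_le1 _) _; rewrite cardsC1 card_ord.
Qed.

Lemma card_le_of_ones_ge3 w1 : w1 \in B -> 2 < #|ones w1| -> #|B| <= n ^ 2.
Proof.
move=> w1B /exists_subset_card[X X1 X3].
set w := lower w1 X.
have wB : w \in B by exact: down_closed_lower.
have onesw : ones w = X by rewrite ones_lower; apply/setIidPr.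
have suppw : #|supp w| = 4 by rewrite card_supp ?onesw ?X3 // (subsetP BX).
pose S j := if j == star w then [set Y : {set 'I_n} | #|Y :\: X| <= 1]
            else if j \in supp w then powerset (supp w) else set0.
apply: (leq_trans (card_le_sum_fibres (S := S) _)).
  move=> v vB; rewrite /S; case: (star v =P star w) => [_|/eqP nst].
    rewrite inE -(leq_add2r #|X|) -cardsU_setD X3 -onesw add1n.
    by have := card_onesU_le BX Bd dB vB wB.
  have sv : supp v \subset supp w by apply: (supp_sub_of_card BX Bd dB wB vB); rewrite // eq_sym.
  rewrite (subsetP sv _ (setU11 _ _)) inE.
  exact: subset_trans (subsetUr _ _) sv.
apply: (@leq_trans (\sum_(j < n) ((j \in [set star w]) * (2 ^ 3 * n.+1) + (j \in supp w) * 16))).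
  apply: leq_sum=> j _; rewrite /S in_set1.
  case: (j =P star w) => _.
    rewrite mul1n; apply: leq_trans (leq_addr _ _).
    by have := card_sets_setD_le1 X; rewrite X3 card_ord.
  rewrite mul0n add0n; case: (j \in supp w); last by rewrite cards0.
  by rewrite card_powerset suppw.
rewrite big_split /= !sum_mem_mul cards1 suppw; nia.
Qed.

Lemma card_le_of_two_stars u1 u2 : u1 \in B -> u2 \in B ->
  #|ones u1| = 2 -> #|ones u2| = 2 -> star u1 != star u2 ->
  (forall v, v \in B -> #|ones v| <= 2) -> #|B| <= n ^ 2.
Proof.
move=> u1B u2B o1 o2 ne le2.
set T1 := supp u1; set T2 := supp u2.
have T13 : #|T1| = 3 by rewrite card_supp ?o1 // (subsetP BX).
have T23 : #|T2| = 3 by rewrite card_supp ?o2 // (subsetP BX).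
pose R j T := [set Y : {set 'I_n} | [&& j \notin Y, #|Y| <= 2 & #|Y :\: T| <= 1]].
pose S j := if j \notin T1 then powerset T1 else if j \notin T2 then powerset T2
            else if j != star u1 then R j T1 else R j T2.
apply: (leq_trans (card_le_sum_fibres (S := S) _)).
  move=> v vB; rewrite /S.
  case: ifP => [vT1|/negbFE vT1].
    by rewrite inE; apply: (ones_sub_supp BX Bd dB u1B vB); rewrite ?T13.
  case: ifP => [vT2|/negbFE vT2].
    by rewrite inE; apply: (ones_sub_supp BX Bd dB u2B vB); rewrite ?T23.
  have fibre u : u \in B -> #|supp u| = 3 -> star u != star v ->
      ones v \in R (star v) (supp u).
    move=> uB su ne'; rewrite inE star_notin_ones ?(subsetP BX) // le2 //=.
    by rewrite -(leq_add2r #|supp u|) {2}su (card_ones_setD_supp_le BX Bd dB).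
  case: ifP => [ne1|/negbFE/eqP e1]; first by apply: fibre; rewrite // eq_sym.
  by apply: fibre; rewrite // e1 eq_sym.
apply: (@leq_trans (\sum_(j < n) ((j \in T1 :&: T2) * (3 * n - 13) + 8))).
  apply: leq_sum=> j _; rewrite /S.
  case: ifP => [jT1|/negbFE jT1] /=; first by rewrite card_powerset T13 leq_addl.
  case: ifP => [jT2|/negbFE jT2] /=; first by rewrite card_powerset T23 leq_addl.
  rewrite in_setI jT1 jT2 mul1n.
  case: ifP => _.
    by apply: leq_trans (card_sets_le2_setD_le1 jT1 T13) _; rewrite card_ord; lia.
  by apply: leq_trans (card_sets_le2_setD_le1 jT2 T23) _; rewrite card_ord; lia.
rewrite big_split /= sum_mem_mul sum_nat_const card_ord.
have T12 : #|T1 :&: T2| <= 3 by rewrite -T13 subset_leq_card ?subsetIl.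
apply: (@leq_trans (3 * (3 * n - 13) + n * 8)); first by rewrite leq_add2r leq_mul2r T12 orbT.
nia.
Qed.

Lemma card_le_of_one_star w0 : w0 \in B -> #|ones w0| = 2 ->
  (forall v, v \in B -> #|ones v| <= 2) ->
  (forall v, v \in B -> #|ones v| = 2 -> star v = star w0) -> #|B| <= n ^ 2.
Proof.
move=> w0B o0 le2 same; set T := supp w0.
have T3 : #|T| = 3 by rewrite card_supp ?o0 // (subsetP BX).
pose S j := if j == star w0 then [set Y : {set 'I_n} | #|Y| <= 2]
            else if j \in T then [set Y : {set 'I_n} | (Y \subset [set~ j]) && (#|Y| <= 1)]
            else [set Y : {set 'I_n} | (Y \subset T) && (#|Y| <= 1)].
apply: (leq_trans (card_le_sum_fibres (S := S) _)).
  move=> v vB; rewrite /S.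
  case: (star v =P star w0) => [_|nst]; first by rewrite inE le2.
  have v1 : #|ones v| <= 1.
    rewrite leqNgt; apply/negP=> v2; apply: nst; apply: (same _ vB).
    by apply/eqP; rewrite eqn_leq le2.
  case: ifP => [vT|vT]; rewrite inE v1 andbT.
    apply/subsetP=> x xv; rewrite !inE; apply: contraTneq xv => ->.
    exact: star_notin_ones (subsetP BX _ vB).
  by apply: (ones_sub_supp BX Bd dB w0B vB); rewrite ?T3 ?vT.
apply: (@leq_trans (\sum_(j < n)
    ((j \in [set star w0]) * ('C(n, 0) + 'C(n, 1) + 'C(n, 2)) + (j \in T) * n + 4))).
  apply: leq_sum=> j _; rewrite /S in_set1.
  case: (j =P star w0) => _.
    rewrite mul1n -addnA; apply: leq_trans (leq_addr _ _).
    by apply: leq_trans (card_sets_le2 _) _; rewrite card_ord.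
  rewrite mul0n add0n; case: ifP => jT.
    by rewrite mul1n; apply: leq_trans (card_subsets_le1 _) _; rewrite cardsC1 card_ord leq_addr.
  by rewrite mul0n add0n; apply: leq_trans (card_subsets_le1 _) _; rewrite T3.
rewrite !big_split /= !sum_mem_mul sum_nat_const card_ord cards1 T3 bin0 bin1 bin2 -divn2.
nia.
Qed.

Theorem down_closed_bound : #|B| <= n ^ 2.
Proof.
case: (pickP (fun w => (w \in B) && (2 < #|ones w|))) => [w /andP[wB w3] | big].
  exact: card_le_of_ones_ge3 wB w3.
have le2 v : v \in B -> #|ones v| <= 2.
  by move=> vB; have := big v; rewrite vB /= => /negbT; rewrite -leqNgt.
case: (pickP (fun p : word n * word n => [&& p.1 \in B, p.2 \in B,
    #|ones p.1| == 2, #|ones p.2| == 2 & star p.1 != star p.2])).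
  move=> [u1 u2] /and5P[/= u1B u2B /eqP o1 /eqP o2 ne].
  exact: card_le_of_two_stars u1B u2B o1 o2 ne le2.
move=> one_star.
case: (pickP (fun w => (w \in B) && (#|ones w| == 2))) => [w0 /andP[w0B /eqP o0] | none2].
  apply: (card_le_of_one_star w0B o0 le2) => v vB ov; apply/eqP.
  by apply: contraFT (one_star (v, w0)) => ne; rewrite /= vB w0B ov o0 eqxx ne.
apply: card_le_of_ones_le1 => w wB; have := none2 w; have := le2 w wB.
by rewrite wB /=; case: #|ones w| => [|[|[|]]].
Qed.

End DownClosedBound.

Section SumSplit.
Local Open Scope ring_scope.

Lemma big_setD1_if (V : nmodType) (T : finType) (f : T -> V) (A : {set T}) a :
  \sum_(k in A) f k = (if a \in A then f a else 0) + \sum_(k in A :\ a) f k.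
Proof.
case: ifP => aA; first by rewrite (big_setD1 a aA).
rewrite add0r; apply: eq_bigl => k; rewrite !inE; case: (k =P a) => // ->.
by rewrite aA.
Qed.

Lemma big_split_pair (V : nmodType) (T : finType) (f : T -> V) (A : {set T}) (i j : T) :
  i != j -> \sum_(k in A) f k = \sum_(k in A :\: [set i; j]) f k
     + (if i \in A then f i else 0) + (if j \in A then f j else 0).
Proof.
move=> ij; rewrite (big_setD1_if _ A i) (big_setD1_if _ (A :\ i) j) in_setD1 eq_sym ij /=.
have -> : (A :\ i) :\ j = A :\: [set i; j].
  by apply/setP=> k; rewrite !inE; case: (k == i); case: (k == j).
by rewrite addrA addrC addrA.
Qed.

End SumSplit.

Section CharTwo.
Local Open Scope ring_scope.
Variable R : idomainType.
Hypothesis pchar2 : 2%N \in [pchar R].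
Implicit Types (a b c d : R).

Lemma pchar2_add_eq0 a b : a + b = 0 -> a = b.
Proof. by move/eqP; rewrite addr_eq0 oppr_pchar2 // => /eqP. Qed.

(* (a + b + c)^3 = a^3 + b^3 + c^3 + 3 (a + b) (b + c) (c + a) in any commutative ring. *)
Lemma sum_cubes_pchar2 a b c d : a + b + c + d = 0 ->
  a ^+ 3 + b ^+ 3 + c ^+ 3 + d ^+ 3 = (a + b) * (b + c) * (c + a).
Proof.
move/pchar2_add_eq0 <-.
have -> : a ^+ 3 + b ^+ 3 + c ^+ 3 + (a + b + c) ^+ 3 = (a + b) * (b + c) * (c + a)
    + 2%:R * (a ^+ 3 + b ^+ 3 + c ^+ 3 + (a + b) * (b + c) * (c + a)) by ring.
by rewrite (pcharf0 pchar2) mul0r addr0.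
Qed.

Lemma big_symdiff (T : finType) (f : T -> R) (A B : {set T}) :
  \sum_(k in A) f k + \sum_(k in B) f k = \sum_(k in symdiff A B) f k.
Proof.
rewrite !(big_mkcond (fun k => k \in _)) -big_split /=.
apply: eq_bigr=> k _; rewrite inE.
by case: (k \in A); case: (k \in B); rewrite ?addr0 ?add0r ?addrr_pchar2.
Qed.

Variables (T : finType) (e : T -> R).
Hypothesis e_inj : injective e.

Lemma sum_set2 (f : T -> R) r s : r != s -> \sum_(k in [set r; s]) f k = f r + f s.
Proof. by move=> rs; rewrite big_setU1 ?inE // big_set1. Qed.

Lemma power_sums_eq0 (S : {set T}) : (#|S| <= 5)%N -> ~~ odd #|S| ->
  \sum_(k in S) e k = 0 -> \sum_(k in S) e k ^+ 3 = 0 -> S = set0.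
Proof.
move=> S5 ev E1 E3.
have : [|| #|S| == 0, #|S| == 2 | #|S| == 4]%N.
  by move: S5 ev; case: #|S| => [|[|[|[|[|[|]]]]]].
case/or3P=> [/eqP/cards0_eq //|/cards2P[r [s [rs Sdef]]]|S4].
  move: E1; rewrite Sdef sum_set2 // => /pchar2_add_eq0 /e_inj rs'.
  by rewrite rs' eqxx in rs.
move: E1 E3; rewrite -!big_enum; have := enum_uniq S.
have : size (enum S) = 4%N by rewrite -cardE (eqP S4).
case: (enum S) => [|a [|b [|c [|d [|]]]]] //= _ /and4P[/[!inE] + + + _].
rewrite !negb_or => /and3P[ab ac _] /andP[bc _] _.
rewrite !big_cons !big_nil !addr0 !addrA => /sum_cubes_pchar2 -> /eqP.
rewrite !mulf_eq0 => /orP[/orP[]|] /eqP /pchar2_add_eq0 /e_inj eq.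
- by rewrite eq eqxx in ab.
- by rewrite eq eqxx in bc.
- by rewrite eq eqxx in ac.
Qed.

Hypothesis cube_inj : injective (fun x : R => x ^+ 3).

Lemma power_sums_two_points (S : {set T}) (i j : T) (bi bj : bool) :
  i != j -> i \notin S -> j \notin S -> (#|S| <= 2)%N -> ~~ odd (#|S| + bi + bj) ->
  \sum_(k in S) e k + (if bi then e i else 0) + (if bj then e j else 0) = 0 ->
  \sum_(k in S) e k ^+ 3 + (if bi then e i ^+ 3 else 0) + (if bj then e j ^+ 3 else 0)
    = e i ^+ 3 + e j ^+ 3 -> False.
Proof.
move=> ij iS jS S2 par h1 h3.
have neq (a b : T) : a != b -> e a = e b -> False.
  by move=> ab /e_inj eab; rewrite eab eqxx in ab.
have : [|| #|S| == 0, #|S| == 1 | #|S| == 2]%N by move: S2; case: #|S| => [|[|[|]]].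
case/or3P.
- move/eqP/cards0_eq => S0; move: par h1 h3; rewrite S0 cards0 !big_set0 !add0r.
  case: bi; case: bj => //= _.
  + by move=> /pchar2_add_eq0 h _; exact: neq ij h.
  + by rewrite !add0r => _ /esym /pchar2_add_eq0 /cube_inj h; exact: neq ij h.
- move/cards1P=> [r S1]; move: par h1 h3 iS jS; rewrite S1 cards1 !big_set1 !inE.
  case: bi; case: bj => //= _.
  + by rewrite addr0 => /pchar2_add_eq0 eri _ ir _; exact: neq ir (esym eri).
  + by rewrite addr0 => /pchar2_add_eq0 erj _ _ jr; exact: neq jr (esym erj).
- move/cards2P=> [r [s [rs S2']]]; move: par h1 h3 iS jS.
  rewrite S2' cards2 rs !sum_set2 //; case: bi; case: bj => //= _.
  + move=> _ /eqP; rewrite -addrA -subr_eq0 addrK.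
    by move=> /eqP /pchar2_add_eq0 /cube_inj h _ _; exact: neq rs h.
  + by rewrite !addr0 => /pchar2_add_eq0 h _ _ _; exact: neq rs h.
Qed.

End CharTwo.

Section GF8.
Local Open Scope ring_scope.
Variable F : finFieldType.
Hypotheses (pchar2 : 2%N \in [pchar F]) (cardF : #|F| = 8%N).

(* Every nonzero x satisfies x^7 = 1, so x is the inverse of (x^3)^2. *)
Lemma cube_inj8 : injective (fun x : F => x ^+ 3).
Proof.
have inv_sq_cube (x : F) : x = (x ^+ 3 ^+ 2)^-1.
  have [->|x0] := eqVneq x 0; first by rewrite !expr0n invr0.
  have x7 : x ^+ 7 = 1.
    apply: (mulfI x0); rewrite -exprS mulr1 -cardF.
    exact: expf_card.
  by rewrite -{1}(mulKf (expf_neq0 2 (expf_neq0 3 x0)) x) -exprM -exprSr x7 mulr1.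
by move=> x y /= E; rewrite (inv_sq_cube x) (inv_sq_cube y) E.
Qed.

Definition e8 (i : 'I_8) : F := enum_val (cast_ord (esym cardF) i).

Lemma e8_inj : injective e8.
Proof. by move=> i j /enum_val_inj /cast_ord_inj. Qed.

Definition even_ones (w : word 8) : {set 'I_8} :=
  if odd #|ones w| then supp w else ones w.

Definition colour (w : word 8) : F * F :=
  (\sum_(k in even_ones w) e8 k, \sum_(k in even_ones w) e8 k ^+ 3 + e8 (star w) ^+ 3).

Lemma even_ones_even w : w \in Xn 8 -> ~~ odd #|even_ones w|.
Proof. by move=> wX; rewrite /even_ones; case: ifP => [h|->] //; rewrite card_supp //= h. Qed.

Lemma mem_even_ones w k : w \in Xn 8 -> k != star w -> (k \in even_ones w) = (k \in ones w).
Proof. by move=> wX ks; rewrite /even_ones; case: ifP => _ //; rewrite in_setU1 (negbTE ks). Qed.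

Lemma ones_even_ones w : w \in Xn 8 -> ones w = even_ones w :\ star w.
Proof.
move=> wX; apply/setP=> k; rewrite in_setD1; case: (k =P star w) => [->|/eqP ks] /=.
  exact/negbTE/star_notin_ones.
by rewrite mem_even_ones.
Qed.

Section ColourClash.
Variables u v : word 8.
Hypotheses (uX : u \in Xn 8) (vX : v \in Xn 8) (uv : colour u = colour v).
Hypothesis duv : (hdist u v <= 4)%N.
Let z := symdiff (even_ones u) (even_ones v).

Let z_even : ~~ odd #|z|.
Proof. by rewrite odd_symdiff (negbTE (even_ones_even uX)) (negbTE (even_ones_even vX)). Qed.

Let sum_z : \sum_(k in z) e8 k = 0.
Proof. by case: uv => E1 _; rewrite -big_symdiff // E1 addrr_pchar2. Qed.

Let sum_cubes_z : \sum_(k in z) e8 k ^+ 3 = e8 (star u) ^+ 3 + e8 (star v) ^+ 3.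
Proof.
case: uv => _ E3; rewrite -big_symdiff //; apply: (pchar2_add_eq0 pchar2).
by rewrite addrACA E3 addrr_pchar2.
Qed.

Let mem_z k : k != star u -> k != star v -> (k \in z) = (u k != v k).
Proof.
move=> ku kv; rewrite inE (XnE k uX) (XnE k vX) (negbTE ku) (negbTE kv).
by rewrite (mem_even_ones uX ku) (mem_even_ones vX kv); case: (k \in ones u); case: (k \in ones v).
Qed.

Lemma colour_clash_same_star : star u = star v -> u = v.
Proof.
move=> e; have zsub : z :\ star u \subset [set k | u k != v k].
  by apply/subsetP=> k /setD1P[ku kz]; rewrite inE -mem_z // -e.
have z5 : (#|z| <= 5)%N.
  rewrite (cardsD1 (star u) z); apply: (@leq_add _ _ 1 4); first by case: (_ \in z).
  exact: leq_trans (subset_leq_card zsub) duv.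
have z0 : z = set0.
  by apply: (power_sums_eq0 pchar2 e8_inj) => //; rewrite sum_cubes_z e addrr_pchar2.
have eA : even_ones u = even_ones v.
  by apply/setP=> k; have /[!in_set] /negPn/eqP : k \notin z by rewrite z0 in_set0.
by apply: Xn_eq; rewrite // (ones_even_ones uX) (ones_even_ones vX) eA e.
Qed.

Lemma colour_clash_star_neq : star u != star v -> False.
Proof.
set i := star u; set j := star v => ij; set S := z :\: [set i; j].
have diff : S :|: [set i; j] \subset [set k | u k != v k].
  apply/subsetP=> k; rewrite in_setU in_setD => /orP[/andP[kij kz]|kij].
    by move: kij; rewrite !inE negb_or => /andP[ki kj]; rewrite -mem_z.
  rewrite inE (XnE _ uX) (XnE _ vX) -/i -/j.
  by move: kij; rewrite !inE => /orP[]/eqP->; rewrite eqxx ?(negbTE ij) // [j == i]eq_sym (negbTE ij).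
have S2 : (#|S| <= 2)%N.
  have := leq_trans (subset_leq_card diff) duv; rewrite cardsU.
  have -> : S :&: [set i; j] = set0.
    by apply/setP=> k; rewrite !inE; case: (k == i); case: (k == j); rewrite ?andbF.
  by rewrite cards0 subn0 cards2 ij addn2.
have par : ~~ odd (#|S| + (i \in z) + (j \in z))%N.
  move: z_even; rewrite (cardsD1 i z) (cardsD1 j (z :\ i)) in_setD1 eq_sym ij /=.
  have -> : (z :\ i) :\ j = S.
    by apply/setP=> k; rewrite !inE; case: (k == i); case: (k == j).
  by move=> h; rewrite -addnA addnCA [(#|S| + _)%N]addnC.
apply: (power_sums_two_points pchar2 e8_inj cube_inj8 ij _ _ S2 par).
- by rewrite !inE eqxx.
- by rewrite !inE eqxx orbT.
- by rewrite -big_split_pair // sum_z.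
- by rewrite -(big_split_pair (fun k => e8 k ^+ 3)) // sum_cubes_z.
Qed.

End ColourClash.

Lemma card_anticode4_8 (B : {set word 8}) : B \subset Xn 8 -> anticode 4 B -> (#|B| <= 8 ^ 2)%N.
Proof.
move=> /subsetP BX Bd.
have colour_inj : {in B &, injective colour}.
  move=> u v uB vB uv; have [uX vX] := (BX _ uB, BX _ vB).
  have [e|ne] := eqVneq (star u) (star v).
    exact: colour_clash_same_star uX vX uv (Bd _ _ uB vB) e.
  by case: (colour_clash_star_neq uX vX uv (Bd _ _ uB vB) ne).
rewrite -(card_in_imset colour_inj).
by apply: leq_trans (subset_leq_card (subsetT _)) _; rewrite cardsT card_prod cardF.
Qed.

End GF8.

Lemma pow2_ge8 m : 8 <= 2 ^ m -> 2 ^ m = 8 \/ 16 <= 2 ^ m.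
Proof.
case: (ltnP m 4) => [m_lt4 | m_ge4] h; last by right; rewrite -[16]/(2 ^ 4) leq_exp2l.
by left; move: m_lt4 h; case: m => [|[|[|[|]]]].
Qed.

Theorem proposition1 (m n : nat) :
  n = 2 ^ m -> 8 <= n ->
  (forall B : {set word n}, B \subset Xn n ->
     (forall u v, u \in B -> v \in B -> hdist u v <= 4) ->
     #|B| <= n ^ 2)
  /\
  (exists B : {set word n}, [/\ B \subset Xn n, diam B = 4 & #|B| = n ^ 2]).
Proof.
move=> n2m n8; split; last first.
  exists (square_code n); split; [exact: square_code_sub | | exact: card_square_code].
  exact/diam_square_code/(leq_trans _ n8).
move=> B BX Bd; have [n_eq8 | n_ge16] : n = 8 \/ 16 <= n 
  by rewrite n2m; apply: pow2_ge8; rewrite -n2m.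
  have [F pchar2 cardF] := @pPrimePowerField 2 3 isT isT.
  by move: B BX Bd; rewrite n_eq8; exact: card_anticode4_8 pchar2 cardF.
have [B' [B'X B'd dB' <-]] := down_closed_compression BX Bd.
clear n2m n8 B BX Bd; case: n B' B'X B'd dB' n_ge16 => [//|n'] B' B'X B'd dB' n_ge16.
exact: down_closed_bound B'X B'd dB' n_ge16.
Qed.
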